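(* Let $H$ be a Byzantine linearizable history of a reliable broadcast object, and suppose that every correct process invokes deliver$(j,ts)$ infinitely often for every process $j$ and timestamp $ts$ (all messages are eventually pulled). Say that a process delivers $m$ for $(j,ts)$ if one of its deliver$(j,ts)$ invocations returns $m\neq\bot$. Then: (Validity) if a correct process $j$ broadcasts $m$ (with timestamp $ts$), then all correct processes eventually deliver $m$; (Agreement) if a correct process delivers $m$ for $(j,ts)$, then all correct processes eventually deliver $m$ for $(j,ts)$; (Integrity) no correct process delivers two different messages for the same $(j,ts)$, and if $j$ is correct then a correct process delivers $m$ for $(j,ts)$ only if $j$ previously invoked broadcast$(ts,m)$.
   Context: Reliable broadcast object (sequential specification): operations broadcast$(ts,v)$ and deliver$(j,ts)$; deliver$(j,ts)$ returns the value $v$ of the first broadcast$(ts,v)$ invoked by process $j$ before it, and $\bot$ if $j$ invoked no such broadcast before it. Processes $\Pi=\{1,\dots,n\}$; up to $f$ may be Byzantine (arbitrary behavior), the others are correct. A history $H$ (sequence of invocation/response events) is linearizable if there is a sequential history, obtained by removing some pending operations and completing others, that preserves the real-time order of operations (response before invocation) and satisfies the sequential specification. $H|_{correct}$ is the subsequence of events of correct processes. $H$ is Byzantine linearizable if there is a linearizable history $H'$ with $H'|_{correct}=H|_{correct}$. *)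

From mathcomp Require Import all_boot.
Set Implicit Arguments. Unset Strict Implicit. Unset Printing Implicit Defensive.

Section RB.
Variables (n : nat) (V : Type).

Inductive op : Type :=
| Broadcast (ts : nat) (v : V)
| Deliver (j : 'I_n) (ts : nat).

(** Responses: broadcast returns an acknowledgment, deliver returns a value or bot (None). *)
Inductive resp : Type :=
| RAck
| RVal (r : option V).

Inductive event : Type :=
| Inv (p : 'I_n) (o : op)
| Res (p : 'I_n) (r : resp).

Definition evproc (e : event) : 'I_n :=
  match e with Inv p _ => p | Res p _ => p end.

(** A (possibly infinite) history: position i holds an event or nothing
    (None is padding, so that finite histories are also representable). *)
Definition history := nat -> option event.

Definition is_p_ev (H : history) (p : 'I_n) (k : nat) : Prop :=
  exists e, H k = Some e /\ evproc e = p.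

Definition next_of (H : history) (p : 'I_n) (i k : nat) : Prop :=
  i < k /\ is_p_ev H p k /\ forall l, i < l -> l < k -> ~ is_p_ev H p l.

Definition well_formed (H : history) : Prop :=
  (forall i p o k, H i = Some (Inv p o) -> next_of H p i k ->
      exists r, H k = Some (Res p r)) /\
  (forall k p r, H k = Some (Res p r) ->
      exists i o, H i = Some (Inv p o) /\ next_of H p i k).

Definition complete_at (H : history) (i k : nat) (r : resp) : Prop :=
  exists p o, H i = Some (Inv p o) /\ next_of H p i k /\ H k = Some (Res p r).

(** Sequential specification, evaluated in a sequential history given by
    positions [pos] (pos i = Some x: the operation invoked at i is the x-th
    operation of the sequential history; None: removed).
    [first_bcast H pos j ts x v]: the first broadcast(ts,_) by j before
    position x has value v. *)
Definition first_bcast (H : history) (pos : nat -> option nat)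
    (j : 'I_n) (ts x : nat) (v : V) : Prop :=
  exists i0 x0, H i0 = Some (Inv j (Broadcast ts v)) /\ pos i0 = Some x0 /\ x0 < x /\
    forall i1 x1 v1, H i1 = Some (Inv j (Broadcast ts v1)) -> pos i1 = Some x1 ->
      x1 < x -> x0 <= x1.

Definition no_bcast_before (H : history) (pos : nat -> option nat)
    (j : 'I_n) (ts x : nat) : Prop :=
  forall i1 x1 v1, H i1 = Some (Inv j (Broadcast ts v1)) -> pos i1 = Some x1 -> ~ (x1 < x).

Definition seq_spec (H : history) (pos : nat -> option nat) (o : op) (x : nat)
    (r : resp) : Prop :=
  match o with
  | Broadcast _ _ => r = RAck
  | Deliver j ts =>
      (exists v, first_bcast H pos j ts x v /\ r = RVal (Some v)) \/
      (no_bcast_before H pos j ts x /\ r = RVal None)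
  end.

(** Linearizability: there is a sequential history (an injective assignment of
    positions to a set of operations that contains all complete operations and
    possibly some pending ones, with chosen responses [rsp] for the completed
    pending ones) that preserves real-time order and satisfies the sequential
    specification. *)
Definition linearizable (H : history) : Prop :=
  well_formed H /\
  exists (pos : nat -> option nat) (rsp : nat -> resp),
    (forall i x, pos i = Some x -> exists p o, H i = Some (Inv p o)) /\
    (forall i k r, complete_at H i k r -> pos i <> None /\ rsp i = r) /\
    (forall i i' x, pos i = Some x -> pos i' = Some x -> i = i') /\
    (forall a ka ra b xa xb, complete_at H a ka ra -> ka < b ->
        pos a = Some xa -> pos b = Some xb -> xa < xb) /\
    (forall i p o x, H i = Some (Inv p o) -> pos i = Some x ->
        seq_spec H pos o x (rsp i)).

Definition correct_ev (correct : {set 'I_n}) (H : history) (i : nat) : Prop :=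
  exists e, H i = Some e /\ evproc e \in correct.

(** H|correct = H'|correct: an order-preserving bijection between the
    positions of correct events of H and of H', preserving the events. *)
Definition same_correct (correct : {set 'I_n}) (H H' : history) : Prop :=
  exists phi : nat -> nat,
    (forall i, correct_ev correct H i -> correct_ev correct H' (phi i) /\ H' (phi i) = H i) /\
    (forall i i', correct_ev correct H i -> correct_ev correct H i' -> i < i' -> phi i < phi i') /\
    (forall k, correct_ev correct H' k -> exists i, correct_ev correct H i /\ phi i = k).

Definition byz_linearizable (correct : {set 'I_n}) (H : history) : Prop :=
  exists H', linearizable H' /\ same_correct correct H H'.

Definition delivers (H : history) (p j : 'I_n) (ts : nat) (m : V) : Prop :=
  exists i k, H i = Some (Inv p (Deliver j ts)) /\ next_of H p i k /\
    H k = Some (Res p (RVal (Some m))).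

End RB.

Arguments RAck {V}.
Arguments RVal {V} r.
Arguments Broadcast {n V} ts v.
Arguments Deliver {n V} j ts.

From mathcomp Require Import all_boot.

(* The correct events of H occur, in the same order, in a linearizable history
   H'.  In H' a deliver(j,ts) returns the value of the first broadcast(ts,_) of
   j linearized before it, and this first broadcast is the same for all
   deliveries linearized after it: this gives agreement and uniqueness.  A
   deliver invoked after a broadcast (or a delivery) has completed is
   linearized after it, hence cannot return bot; since every correct process
   keeps pulling, it eventually invokes such a deliver.  If j is correct, the
   first broadcast in H' is an event of j in H, and real-time order forces it
   to precede the delivery. *)

Set Implicit Arguments.
Unset Strict Implicit.
Unset Printing Implicit Defensive.

Section ReliableBroadcast.

Variables (n : nat) (V : Type) (correct : {set 'I_n}) (H H' : history n V).
Variables (phi : nat -> nat) (pos : nat -> option nat) (rsp : nat -> resp V).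

Hypothesis phi_event : forall i, correct_ev correct H i ->
  correct_ev correct H' (phi i) /\ H' (phi i) = H i.
Hypothesis phi_increasing : forall i i', correct_ev correct H i ->
  correct_ev correct H i' -> i < i' -> phi i < phi i'.
Hypothesis phi_onto : forall k, correct_ev correct H' k ->
  exists i, correct_ev correct H i /\ phi i = k.

Hypothesis inv_res : forall i p o k, H' i = Some (Inv p o) -> next_of H' p i k ->
  exists r, H' k = Some (Res p r).
Hypothesis complete_pos : forall i k r, complete_at H' i k r ->
  pos i <> None /\ rsp i = r.
Hypothesis pos_inj : forall i i' x, pos i = Some x -> pos i' = Some x -> i = i'.
Hypothesis real_time : forall a ka ra b xa xb, complete_at H' a ka ra -> ka < b ->
  pos a = Some xa -> pos b = Some xb -> xa < xb.
Hypothesis spec_holds : forall i p o x, H' i = Some (Inv p o) -> pos i = Some x ->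
  seq_spec H' pos o x (rsp i).

Hypothesis pulls : forall p, p \in correct -> forall (j : 'I_n) (ts N : nat),
  exists i, N <= i /\ H i = Some (Inv p (Deliver j ts)).

Lemma next_of_le p i k l : next_of H p i k -> i < l -> is_p_ev H p l -> k <= l.
Proof.
by case=> _ [_ nb] il pl; rewrite leqNgt; apply/negP => lk; exact: nb l il lk pl.
Qed.

Lemma next_of_exists p i l : i < l -> is_p_ev H p l -> exists k, next_of H p i k.
Proof.
move=> il pl.
pose b k := (i < k) && (if H k is Some e then evproc e == p else false).
have bP k : reflect (i < k /\ is_p_ev H p k) (b k).
  rewrite /b /is_p_ev; case: (H k) => [e|]; apply: (iffP idP).
  - by case/andP => -> /eqP <-; split => //; exists e.
  - by case=> -> [e' [[<-] ->]]; rewrite eqxx.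
  - by case/andP.
  - by case=> _ [e' []].
have [k /bP [ik pk] kmin] := ex_minnP (ex_intro b l (introT (bP l) (conj il pl))).
exists k; split=> //; split=> // m im mk pm.
by have := kmin m (introT (bP m) (conj im pm)); rewrite leqNgt mk.
Qed.

Lemma recurring_invocation_next p o :
  (forall N, exists i, N <= i /\ H i = Some (Inv p o)) ->
  forall N, exists d k, [/\ N <= d, H d = Some (Inv p o) & next_of H p d k].
Proof.
move=> often N; have [d [Nd Hd]] := often N; have [l [dl Hl]] := often d.+1.
have [k nk] := next_of_exists dl (ex_intro _ (Inv p o) (conj Hl erefl)).
by exists d, k.
Qed.

Lemma phi_eventE i : correct_ev correct H i -> H' (phi i) = H i.
Proof. by move=> Ci; case: (phi_event Ci). Qed.

Lemma phi_monotone i i' : correct_ev correct H i -> correct_ev correct H i' ->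
  i <= i' -> phi i <= phi i'.
Proof.
move=> Ci Ci'; rewrite leq_eqVlt => /predU1P[-> //|lt].
exact/ltnW/phi_increasing.
Qed.

Lemma preimage_event k e : H' k = Some e -> evproc e \in correct ->
  exists2 i, phi i = k & H i = Some e.
Proof.
move=> Hk ec; have [|i [Ci ik]] := phi_onto (k := k); first by exists e.
by exists i; rewrite // -(phi_eventE Ci) ik.
Qed.

Lemma next_of_phi p i k : p \in correct -> is_p_ev H p i -> next_of H p i k ->
  next_of H' p (phi i) (phi k).
Proof.
move=> pc [e [He ep]] [ik [[e' [He' ep']] nb]].
have Ci : correct_ev correct H i by exists e; rewrite He ep.
have Ck : correct_ev correct H k by exists e'; rewrite He' ep'.
split; first exact: phi_increasing.
split; first by exists e'; rewrite phi_eventE.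
move=> l il lk [e2 [He2 ep2]].
have [l0 el Hl0] := preimage_event He2 (etrans (congr1 _ ep2) pc); subst l.
have Cl0 : correct_ev correct H l0 by exists e2; rewrite Hl0 ep2.
apply: (nb l0); last by exists e2.
- rewrite ltnNge; apply/negP => /(phi_monotone Cl0 Ci).
  by rewrite leqNgt il.
- rewrite ltnNge; apply/negP => /(phi_monotone Ck Cl0).
  by rewrite leqNgt lk.
Qed.

Lemma first_bcast_unique j ts x1 x2 m1 m2 :
  first_bcast H' pos j ts x1 m1 -> first_bcast H' pos j ts x2 m2 -> m1 = m2.
Proof.
wlog le12 : x1 x2 m1 m2 / x1 <= x2.
  move=> wlog F1 F2; case: (leqP x1 x2) => [|/ltnW] le.
  - exact: wlog F1 F2.
  - exact/esym/(wlog _ _ _ _ le F2 F1).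
move=> [i1 [y1 [Hi1 [P1 [lt1 min1]]]]] [i2 [y2 [Hi2 [P2 [lt2 min2]]]]].
have y21 : y2 <= y1 := min2 _ _ _ Hi1 P1 (leq_trans lt1 le12).
have y12 : y1 <= y2 := min1 _ _ _ Hi2 P2 (leq_ltn_trans y21 lt1).
have y12E : y1 = y2 by apply/eqP; rewrite eqn_leq y12 y21.
rewrite y12E in P1; have i12E := pos_inj P1 P2.
by move: Hi2; rewrite -i12E Hi1 => -[].
Qed.

Lemma seq_spec_deliver_after_bcast j ts y r b x v :
  seq_spec H' pos (Deliver j ts) y r ->
  H' b = Some (Inv j (Broadcast ts v)) -> pos b = Some x -> x < y ->
  exists2 m, first_bcast H' pos j ts y m & r = RVal (Some m).
Proof.
by case=> [[m [F ->]]|[nb _]] Hb Pb xy; [exists m | case: (nb _ _ _ Hb Pb xy)].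
Qed.

Lemma correct_op_linearized p i o k : p \in correct ->
  H i = Some (Inv p o) -> next_of H p i k ->
  exists r x, [/\ H k = Some (Res p r), complete_at H' (phi i) (phi k) r,
                 pos (phi i) = Some x & seq_spec H' pos o x r].
Proof.
move=> pc Hi nk.
have Ci : correct_ev correct H i by exists (Inv p o).
have Ck : correct_ev correct H k.
  by case: nk => _ [[e [He ep]] _]; exists e; rewrite He ep.
have Hi' : H' (phi i) = Some (Inv p o) by rewrite phi_eventE.
have nk' : next_of H' p (phi i) (phi k) by apply: next_of_phi nk; last exists (Inv p o).
have [r Hk'] := inv_res Hi' nk'.
have cmp : complete_at H' (phi i) (phi k) r by exists p, o.
have [] := complete_pos cmp; case Px: (pos (phi i)) => [x|] // _ rspE.
exists r, x; split => //; first by rewrite -(phi_eventE Ck).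
by rewrite -rspE; exact: spec_holds Hi' Px.
Qed.

Lemma linearized_before i k d r x y : complete_at H' (phi i) (phi k) r ->
  correct_ev correct H k -> correct_ev correct H d -> k < d ->
  pos (phi i) = Some x -> pos (phi d) = Some y -> x < y.
Proof. by move=> cmp Ck Cd kd; apply: real_time cmp _; exact: phi_increasing. Qed.

Lemma deliver_first_bcast p j ts m i k : p \in correct ->
  H i = Some (Inv p (Deliver j ts)) -> next_of H p i k ->
  H k = Some (Res p (RVal (Some m))) ->
  exists x, [/\ pos (phi i) = Some x, first_bcast H' pos j ts x m
              & complete_at H' (phi i) (phi k) (RVal (Some m))].
Proof.
move=> pc Hi nk Hk.
have [r [x [Hk' cmp Px sp]]] := correct_op_linearized pc Hi nk.
have rE : r = RVal (Some m) by move: Hk'; rewrite Hk => -[].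
subst r; case: sp => [[v [F [vE]]]|[_ //]].
by subst v; exists x.
Qed.

Lemma pulled_deliver p j ts N : p \in correct ->
  exists d k, [/\ N <= d, H d = Some (Inv p (Deliver j ts)) & next_of H p d k].
Proof. by move=> pc; apply: recurring_invocation_next; exact: pulls. Qed.

Lemma delivers_after_linearized p j ts i k r x b x0 v : p \in correct ->
  correct_ev correct H k -> complete_at H' (phi i) (phi k) r -> pos (phi i) = Some x ->
  H' b = Some (Inv j (Broadcast ts v)) -> pos b = Some x0 -> x0 <= x ->
  exists y m, [/\ x < y, first_bcast H' pos j ts y m & delivers H p j ts m].
Proof.
move=> pc Ck cmp Px Hb Pb x0x.
have [d [kd [kd_lt Hd nkd]]] := pulled_deliver j ts k.+1 pc.
have [r' [y [Hkd _ Py sp]]] := correct_op_linearized pc Hd nkd.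
have Cd : correct_ev correct H d by exists (Inv p (Deliver j ts)).
have xy : x < y := linearized_before cmp Ck Cd kd_lt Px Py.
have [m F rE] := seq_spec_deliver_after_bcast sp Hb Pb (leq_ltn_trans x0x xy).
by exists y, m; split => //; exists d, kd; rewrite -rE.
Qed.

Lemma first_bcast_of_first_broadcast j ts m i kb r x y v : j \in correct ->
  H i = Some (Inv j (Broadcast ts m)) ->
  (forall i' m', i' < i -> H i' = Some (Inv j (Broadcast ts m')) -> m' = m) ->
  next_of H j i kb -> H kb = Some (Res j r) -> complete_at H' (phi i) (phi kb) r ->
  pos (phi i) = Some x -> x < y -> first_bcast H' pos j ts y v -> v = m.
Proof.
move=> jc Hi first nkb Hkb cmp Px xy [i0 [x0 [Hi0 [P0 [_ min0]]]]].
have [b bE Hb] := preimage_event Hi0 jc; subst i0.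
have Ci : correct_ev correct H i by exists (Inv j (Broadcast ts m)).
have Ckb : correct_ev correct H kb by exists (Res j r).
have Cb : correct_ev correct H b by exists (Inv j (Broadcast ts v)).
case: (ltngtP b i) => [bi|ib|biE]; first exact: first bi Hb; last first.
  by move: Hb; rewrite biE Hi => -[].
(* A later broadcast of j follows its response kb, so it is linearized after x,
   against the minimality of x0. *)
have kbb : kb < b.
  rewrite ltn_neqAle (next_of_le nkb ib); last by exists (Inv j (Broadcast ts v)).
  by rewrite andbT; apply/eqP => kbE; move: Hb; rewrite -kbE Hkb.
have := linearized_before cmp Ckb Cb kbb Px P0.
have Hi' : H' (phi i) = Some (Inv j (Broadcast ts m)) by rewrite phi_eventE.
by rewrite ltnNge (min0 _ _ _ Hi' Px xy).
Qed.

Lemma rb_validity j ts m i : j \in correct ->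
  H i = Some (Inv j (Broadcast ts m)) ->
  (forall i' m', i' < i -> H i' = Some (Inv j (Broadcast ts m')) -> m' = m) ->
  forall p, p \in correct -> delivers H p j ts m.
Proof.
move=> jc Hi first p pc.
(* j keeps pulling, so it has an event after i: its broadcast completes. *)
have [d [_ [id Hd _]]] := pulled_deliver j ts i.+1 jc.
have [kb nkb] := next_of_exists id (ex_intro _ (Inv j (Deliver j ts)) (conj Hd erefl)).
have [r [x [Hkb cmp Px _]]] := correct_op_linearized jc Hi nkb.
have Ckb : correct_ev correct H kb by exists (Res j r).
have Hi' : H' (phi i) = Some (Inv j (Broadcast ts m)).
  by rewrite phi_eventE //; exists (Inv j (Broadcast ts m)).
have [y [m' [xy F del]]] := delivers_after_linearized pc Ckb cmp Px Hi' Px (leqnn x).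
by rewrite -(first_bcast_of_first_broadcast jc Hi first nkb Hkb cmp Px xy F).
Qed.

Lemma rb_agreement p j ts m : p \in correct -> delivers H p j ts m ->
  forall q, q \in correct -> delivers H q j ts m.
Proof.
move=> pc [i [k [Hi [nk Hk]]]] q qc.
have [x [Px F cmp]] := deliver_first_bcast pc Hi nk Hk.
have Ck : correct_ev correct H k by exists (Res p (RVal (Some m))).
have [i0 [x0 [Hi0 [P0 [x0x _]]]]] := F.
have [y [m' [xy F' del]]] := delivers_after_linearized qc Ck cmp Px Hi0 P0 (ltnW x0x).
by rewrite (first_bcast_unique F F').
Qed.

Lemma rb_no_duplication p j ts m1 m2 : p \in correct ->
  delivers H p j ts m1 -> delivers H p j ts m2 -> m1 = m2.
Proof.
move=> pc [i1 [k1 [Hi1 [nk1 Hk1]]]] [i2 [k2 [Hi2 [nk2 Hk2]]]].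
have [x1 [_ F1 _]] := deliver_first_bcast pc Hi1 nk1 Hk1.
have [x2 [_ F2 _]] := deliver_first_bcast pc Hi2 nk2 Hk2.
exact: first_bcast_unique F1 F2.
Qed.

Lemma rb_integrity p j ts m i k : p \in correct -> j \in correct ->
  H i = Some (Inv p (Deliver j ts)) -> next_of H p i k ->
  H k = Some (Res p (RVal (Some m))) ->
  exists b, b < k /\ H b = Some (Inv j (Broadcast ts m)).
Proof.
move=> pc jc Hi nk Hk.
have [x [Px [i0 [x0 [Hi0 [P0 [x0x _]]]]] cmp]] := deliver_first_bcast pc Hi nk Hk.
have [b bE Hb] := preimage_event Hi0 jc; subst i0.
exists b; split => //.
have Ck : correct_ev correct H k by exists (Res p (RVal (Some m))).
have Cb : correct_ev correct H b by exists (Inv j (Broadcast ts m)).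
case: (ltngtP b k) => // [kb|bk]; last by move: Hb; rewrite bk Hk.
by have := linearized_before cmp Ck Cb kb Px P0; rewrite ltnNge ltnW.
Qed.

End ReliableBroadcast.

Theorem lemma6p2 (n f : nat) (V : Type) (correct : {set 'I_n}) (H : history n V)
  (Hf : #|~: correct| <= f)
  (Hbl : byz_linearizable correct H)
  (Hpull : forall p, p \in correct -> forall (j : 'I_n) (ts N : nat),
      exists i, N <= i /\ H i = Some (Inv p (Deliver j ts))) :
  (* Validity *)
  (forall (j : 'I_n) ts (m : V) i, j \in correct ->
      H i = Some (Inv j (Broadcast ts m)) ->
      (forall i' m', i' < i -> H i' = Some (Inv j (Broadcast ts m')) -> m' = m) ->
      forall p, p \in correct -> delivers H p j ts m) /\
  (* Agreement *)
  (forall (p j : 'I_n) ts (m : V), p \in correct -> delivers H p j ts m ->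
      forall q, q \in correct -> delivers H q j ts m) /\
  (* Integrity (no two different messages) *)
  (forall (p j : 'I_n) ts (m1 m2 : V), p \in correct ->
      delivers H p j ts m1 -> delivers H p j ts m2 -> m1 = m2) /\
  (* Integrity (only broadcast messages are delivered, if the sender is correct) *)
  (forall (p j : 'I_n) ts (m : V) i k, p \in correct -> j \in correct ->
      H i = Some (Inv p (Deliver j ts)) -> next_of H p i k ->
      H k = Some (Res p (RVal (Some m))) ->
      exists b, b < k /\ H b = Some (Inv j (Broadcast ts m))).
Proof.
case: Hbl => H' [[[inv_res _] [pos [rsp [_ [complete_pos [pos_inj [real_time spec]]]]]]]
  [phi [phi_event [phi_increasing phi_onto]]]].
split; [|split; [|split]].
- exact: rb_validity phi_event phi_increasing phi_onto inv_res complete_pos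
    real_time spec Hpull.
- exact: rb_agreement phi_event phi_increasing phi_onto inv_res complete_pos
    pos_inj real_time spec Hpull.
- exact: rb_no_duplication phi_event phi_increasing phi_onto inv_res complete_pos
    pos_inj spec.
- exact: rb_integrity phi_event phi_increasing phi_onto inv_res complete_pos
    real_time spec.
Qed.
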